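(* For every $n_0>3$ there exist asymptotically polytropic equations of state having $n_0$ as their low-pressure asymptotic index such that some of the corresponding regular perfect fluid solutions have infinite radius (i.e. $p(r)>0$ for all $r>0$).
   Context: Equation of state: a barotropic relation $\rho=\rho(p)$ with $\rho>0$ for $p>0$ and $\eta(p)=\int_0^p dp'/\rho(p')$ finite for $p>0$. Index function: $n(\eta)=\frac{\eta}{\rho}\frac{d\rho}{d\eta}$. Asymptotically polytropic with indices $n_0,n_1$: $n$ bounded and non-negative, $n(\eta)\to n_0$ (with error $O(\eta^{a_0})$, $a_0>0$) as $\eta\to0$ and $n(\eta)\to n_1$ (error $O(\eta^{-a_1})$) as $\eta\to\infty$; the examples in the paper are composite equations of state, with $n(\eta)=n_0$ for $\eta\le\eta_j$ and $n(\eta)=n_1$ (a constant slightly greater than 5) for $\eta>\eta_j$. Regular perfect fluid solution: solution of $dm/dr=4\pi r^2\rho(p)$, $dp/dr=-m\rho(p)/r^2$ with $m\to0$ and $p\to p_c\in(0,\infty)$ as $r\to0$. *)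

From Stdlib Require Import Reals List.
From Coquelicot Require Import Coquelicot.
Open Scope R_scope.

(* Barotropic equation of state rho = rho(p): rho > 0 for p > 0 and
   eta(p) = int_0^p dp'/rho(p') is finite for p > 0 (improper integral
   at 0, since rho(0) may vanish).  [eta] is the function p |-> eta(p). *)
Definition barotropic_eos (rho eta : R -> R) : Prop :=
  (forall p, 0 < p -> 0 < rho p) /\
  (forall p, 0 < p ->
     is_RInt_gen (fun q => / rho q) (at_right 0) (at_point p) (eta p)).

(* [nf] is the index function n(eta) = (eta/rho) d rho/d eta, where rho is
   viewed as a function [rhoe] of eta (rhoe (eta p) = rho p).  eta ranges over
   all of (0,oo).  rho is continuous in eta and the defining identity
   d rho/d eta = n rho / eta holds at every eta > 0 except finitely many
   (needed for the paper's composite equations of state, whose n jumps). *)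
Definition index_function (rho eta nf : R -> R) : Prop :=
  exists rhoe : R -> R,
    (forall p, 0 < p -> rhoe (eta p) = rho p) /\
    (forall x, 0 < x -> exists p, 0 < p /\ eta p = x) /\
    (forall x, 0 < x -> continuous rhoe x) /\
    exists S : list R, forall x, 0 < x -> ~ In x S ->
      is_derive rhoe x (nf x * rhoe x / x).

Definition asymptotically_polytropic (nf : R -> R) (n0 n1 : R) : Prop :=
  (exists M, forall x, 0 < x -> 0 <= nf x <= M) /\
  (exists a0 C d, 0 < a0 /\ 0 < d /\
     forall x, 0 < x < d -> Rabs (nf x - n0) <= C * Rpower x a0) /\
  (exists a1 C K, 0 < a1 /\
     forall x, K < x -> 0 < x -> Rabs (nf x - n1) <= C * Rpower x (- a1)).

Definition regular_solution_on_halfline (rho m p : R -> R) (pc : R) : Prop :=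
  0 < pc /\
  (forall r, 0 < r ->
     is_derive m r (4 * PI * r ^ 2 * rho (p r)) /\
     is_derive p r (- (m r * rho (p r)) / r ^ 2)) /\
  filterlim m (at_right 0) (locally 0) /\
  filterlim p (at_right 0) (locally pc).

From Stdlib Require Import Reals Lra ClassicalEpsilon.
From Coquelicot Require Import Coquelicot.
Open Scope R_scope.

(* The equation of state is reverse-engineered from an explicit profile of
   infinite radius.  Put alpha = 1/(n0 - 1) and prescribe
   eta(r) = (1 + r^2)^(-alpha); the second structure equation reads
   d eta/dr = - m / r^2, which fixes m = 2 alpha r^3 (1 + r^2)^(-alpha-1), and the
   first one then fixes rho along the profile.  Since 1 + r^2 = eta^(-(n0-1)),
   this rho is the function A eta^n0 + B eta^(2 n0 - 1) of eta, with A > 0 exactly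
   because n0 > 3.  Its index n = eta rho'/rho increases from n0 (eta -> 0) to
   2 n0 - 1 (eta -> oo).  The pressure p(eta) = int rho d eta is an increasing
   bijection of (0,oo), and its inverse is the enthalpy eta(p) of a barotropic
   equation of state for which p(r) = p(eta(r)) > 0 for every r. *)

Lemma continuous_at_right (f : R -> R) x :
  continuous f x -> filterlim f (at_right x) (locally (f x)).
Proof.
  intros Hf. apply (filterlim_filter_le_1 (F := locally x) f); [|exact Hf].
  intros Q [eps HQ]. exists eps; intros y Hy _; now apply HQ.
Qed.

Lemma Rpower_pos x e : 0 < Rpower x e.
Proof. apply exp_pos. Qed.

Lemma Rpower_1_l e : Rpower 1 e = 1.
Proof. unfold Rpower; now rewrite ln_1, Rmult_0_r, exp_0. Qed.

Lemma is_derive_Rpower x e : 0 < x -> is_derive (fun t => Rpower t e) x (e * Rpower x (e - 1)).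
Proof. intros Hx; now apply is_derive_Reals, derivable_pt_lim_power. Qed.

Lemma Rpower_succ x e : 0 < x -> Rpower x (e + 1) = Rpower x e * x.
Proof. intros Hx; now rewrite Rpower_plus, Rpower_1. Qed.

Lemma Rpower_le_id x e : 0 < x <= 1 -> 1 <= e -> Rpower x e <= x.
Proof.
  intros Hx He. replace e with (e - 1 + 1) by ring.
  rewrite Rpower_succ by lra.
  assert (Rpower x (e - 1) <= Rpower 1 (e - 1)) by (apply Rle_Rpower_l; lra).
  rewrite Rpower_1_l in *.
  pose proof (Rpower_pos x (e - 1)); nra.
Qed.

Lemma Rpower_ge_id x e : 1 <= x -> 1 <= e -> x <= Rpower x e.
Proof.
  intros Hx He. replace e with (e - 1 + 1) by ring.
  rewrite Rpower_succ by lra.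
  assert (Rpower 1 (e - 1) <= Rpower x (e - 1)) by (apply Rle_Rpower_l; lra).
  rewrite Rpower_1_l in *.
  nra.
Qed.

Lemma ratio_sum_bounds a b : 0 < a -> 0 < b ->
  0 < b / (a + b) < 1 /\ b / (a + b) <= b / a /\ a / (a + b) <= a / b.
Proof.
  intros Ha Hb.
  assert (Hab : b / (a + b) = 1 - a / (a + b)) by (field; lra).
  assert (0 < a / (a + b)) by (apply Rdiv_lt_0_compat; lra).
  assert (0 < b / (a + b)) by (apply Rdiv_lt_0_compat; lra).
  unfold Rdiv in *; repeat split; try lra;
    apply Rmult_le_compat_l; try lra; apply Rinv_le_contravar; lra.
Qed.

Lemma is_derive_Rpower_1_plus_sqr e r :
  is_derive (fun t => Rpower (1 + t ^ 2) e) r (2 * r * (e * Rpower (1 + r ^ 2) (e - 1))).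
Proof.
  apply (is_derive_comp (fun t => Rpower t e) (fun t => 1 + t ^ 2)).
  - apply is_derive_Rpower; pose proof (pow2_ge_0 r); lra.
  - auto_derive; auto; ring.
Qed.

Lemma is_RInt_gen_at_right (f F : R -> R) (a0 b L : R) :
  (forall a, a0 < a -> is_RInt f a b (F b - F a)) ->
  filterlim F (at_right a0) (locally L) ->
  is_RInt_gen f (at_right a0) (at_point b) (F b - L).
Proof.
  intros Hint HF P [eps HP].
  apply Filter_prod with (fun a => a0 < a /\ ball L eps (F a)) (fun x => x = b).
  - apply filter_and; [now exists (mkposreal 1 Rlt_0_1)|].
    apply HF; apply locally_ball.
  - reflexivity.
  - intros a x [Ha HFa] ->; simpl. exists (F b - F a); split; [now apply Hint|].
    apply HP. apply ball_sym in HFa.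
    unfold ball in *; simpl in *; unfold AbsRing_ball, abs, minus, plus, opp in *; simpl in *.
    now replace (F b - F a + - (F b - L)) with (L + - F a) by ring.
Qed.

Section InverseOfPressure.

Variables P rho : R -> R.
Hypothesis P_der : forall x, 0 < x -> is_derive P x (rho x).
Hypothesis rho_pos : forall x, 0 < x -> 0 < rho x.
Hypothesis rho_cont : forall x, 0 < x -> continuous rho x.
Hypothesis P_pos : forall x, 0 < x -> 0 < P x.
Hypothesis P_onto : forall q, 0 < q -> exists x, 0 < x /\ P x = q.

Lemma P_lt x y : 0 < x -> x < y -> P x < P y.
Proof.
  intros Hx Hxy.
  refine (incr_function P (Finite 0) p_infty rho _ _ x y Hx Hxy I).
  - intros t Ht _; now apply P_der.
  - intros t Ht _; now apply Rlt_gt, rho_pos.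
Qed.

Lemma P_le x y : 0 < x -> x <= y -> P x <= P y.
Proof. intros Hx [Hxy|<-]; [left; now apply P_lt|lra]. Qed.

Lemma P_le_inv x y : 0 < x -> 0 < y -> P x <= P y -> x <= y.
Proof.
  intros Hx Hy H. destruct (Rle_or_lt x y) as [|Hyx]; auto.
  pose proof (P_lt y x Hy Hyx); lra.
Qed.

(* The enthalpy eta(p) of the equation of state; its values at q <= 0 are
   unspecified. *)
Definition Pinv q := epsilon (inhabits 0) (fun x => 0 < x /\ P x = q).

Lemma Pinv_spec q : 0 < q -> 0 < Pinv q /\ P (Pinv q) = q.
Proof. intros Hq. unfold Pinv; apply epsilon_spec, P_onto, Hq. Qed.

Lemma P_Pinv q : 0 < q -> P (Pinv q) = q.
Proof. intros Hq; apply Pinv_spec, Hq. Qed.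

Lemma Pinv_pos q : 0 < q -> 0 < Pinv q.
Proof. intros Hq; apply Pinv_spec, Hq. Qed.

Lemma Pinv_P x : 0 < x -> Pinv (P x) = x.
Proof.
  intros Hx. destruct (Pinv_spec (P x) (P_pos x Hx)) as [H0 HP].
  apply Rle_antisym; apply P_le_inv; rewrite ?HP; auto; lra.
Qed.

Lemma Pinv_le q q' : 0 < q -> q <= q' -> Pinv q <= Pinv q'.
Proof.
  intros Hq Hqq'. destruct (Pinv_spec q Hq) as [H0 HP].
  destruct (Pinv_spec q' ltac:(lra)) as [H0' HP'].
  apply P_le_inv; lra.
Qed.

Lemma Pinv_lt q x : 0 < q -> 0 < x -> q < P x -> Pinv q < x.
Proof.
  intros Hq Hx H. destruct (Pinv_spec q Hq) as [H0 HP].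
  destruct (Rlt_or_le (Pinv q) x) as [|Hle]; auto.
  pose proof (P_le x (Pinv q) Hx Hle); lra.
Qed.

Lemma P_continuity_pt x : 0 < x -> continuity_pt P x.
Proof.
  intros Hx. apply continuity_pt_filterlim, (ex_derive_continuous P).
  exists (rho x); now apply P_der.
Qed.

Lemma Pinv_continuity_pt q : 0 < q -> continuity_pt Pinv q.
Proof.
  intros Hq. pose proof (Pinv_pos q Hq) as Hx.
  assert (Hlb : 0 < P (Pinv q / 2)) by (apply P_pos; lra).
  apply (Ranalysis5.continuity_pt_recip_interv P Pinv (Pinv q / 2) (2 * Pinv q)).
  - lra.
  - intros x y Hx' Hxy _; apply P_lt; lra.
  - intros y Hy _; unfold comp, id; apply P_Pinv; lra.
  - intros y Hy Hy'; split; apply P_le_inv; rewrite ?P_Pinv; try lra;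
      apply Pinv_pos; lra.
  - intros x Hx'; apply P_continuity_pt; lra.
  - rewrite <- (P_Pinv q Hq) at 2 3; split; apply P_lt; lra.
Qed.

Lemma is_derive_Pinv q : 0 < q -> is_derive Pinv q (/ rho (Pinv q)).
Proof.
  intros Hq.
  assert (Prf : forall x, Pinv (q / 2) <= x <= Pinv (2 * q) -> derivable_pt P x).
  { intros x Hx. exists (rho x). apply is_derive_Reals, P_der.
    pose proof (Pinv_pos (q / 2) ltac:(lra)); lra. }
  assert (Hmono : Pinv (q / 2) <= Pinv q <= Pinv (2 * q)) by (split; apply Pinv_le; lra).
  assert (Hd : derive_pt P (Pinv q) (Prf (Pinv q) Hmono) = rho (Pinv q))
    by apply derive_pt_eq_0, is_derive_Reals, P_der, Pinv_pos, Hq.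
  apply is_derive_Reals.
  replace (/ rho (Pinv q)) with (1 / derive_pt P (Pinv q) (Prf (Pinv q) Hmono)).
  - apply Ranalysis5.derivable_pt_lim_recip_interv.
    + now apply Pinv_continuity_pt.
    + lra.
    + lra.
    + intros x Hx; unfold comp, id; apply P_Pinv; lra.
    + rewrite Hd; apply Rgt_not_eq, rho_pos, Pinv_pos, Hq.
  - rewrite Hd; field; apply Rgt_not_eq, rho_pos, Pinv_pos, Hq.
Qed.

Lemma continuous_inv_rho_Pinv q : 0 < q -> continuous (fun q => / rho (Pinv q)) q.
Proof.
  intros Hq. apply continuous_Rinv_comp.
  - apply (continuous_comp Pinv rho).
    + now apply continuity_pt_filterlim, Pinv_continuity_pt.
    + now apply rho_cont, Pinv_pos.
  - now apply Rgt_not_eq, rho_pos, Pinv_pos.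
Qed.

Lemma is_RInt_inv_rho_Pinv a b : 0 < a -> 0 < b ->
  is_RInt (fun q => / rho (Pinv q)) a b (Pinv b - Pinv a).
Proof.
  intros Ha Hb.
  assert (Hab : forall q, Rmin a b <= q <= Rmax a b -> 0 < q).
  { intros q Hq. pose proof (Rmin_glb_lt a b 0 Ha Hb); lra. }
  apply (is_RInt_derive Pinv); intros q Hq.
  - now apply is_derive_Pinv, Hab.
  - now apply continuous_inv_rho_Pinv, Hab.
Qed.

Lemma Pinv_at_right_0 : filterlim Pinv (at_right 0) (locally 0).
Proof.
  intros Q [eps HQ]. pose proof (P_pos eps (cond_pos eps)) as Heps.
  exists (mkposreal _ Heps). intros q Hq Hq0. apply HQ.
  assert (Pinv q < eps).
  { apply Pinv_lt; [lra|apply cond_pos|].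
    apply Rabs_def2 in Hq; simpl in Hq; unfold minus, plus, opp in Hq; simpl in Hq; lra. }
  pose proof (Pinv_pos q Hq0).
  apply Rabs_def1; unfold minus, plus, opp; simpl; lra.
Qed.

Lemma barotropic_eos_Pinv : barotropic_eos (fun q => rho (Pinv q)) Pinv.
Proof.
  split.
  - intros q Hq; now apply rho_pos, Pinv_pos.
  - intros p Hp. rewrite <- (Rminus_0_r (Pinv p)).
    apply (is_RInt_gen_at_right (fun q => / rho (Pinv q)) Pinv).
    + intros a Ha. now apply is_RInt_inv_rho_Pinv.
    + exact Pinv_at_right_0.
Qed.

Lemma index_function_Pinv nf :
  (forall x, 0 < x -> is_derive rho x (nf x * rho x / x)) ->
  index_function (fun q => rho (Pinv q)) Pinv nf.
Proof.
  intros Hn. exists rho. split; [|split; [|split]].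
  - reflexivity.
  - intros x Hx. exists (P x); split; [now apply P_pos|now apply Pinv_P].
  - exact rho_cont.
  - exists nil; intros x Hx _; now apply Hn.
Qed.

End InverseOfPressure.

Section PlummerModel.

Variable k : R.
Hypothesis k_gt_3 : 3 < k.

Definition alpha := / (k - 1).
Definition A := alpha / (2 * PI) * (1 - 2 * alpha).
Definition B := alpha / (2 * PI) * (2 + 2 * alpha).

Definition rho_eta x := A * Rpower x k + B * Rpower x (2 * k - 1).
Definition p_eta x := A * Rpower x (k + 1) / (k + 1) + B * Rpower x (2 * k) / (2 * k).
Definition n_eta x := k + (k - 1) * B * Rpower x (k - 1) / (A + B * Rpower x (k - 1)).

Lemma alpha_mul_k : alpha * k = 1 + alpha.
Proof. unfold alpha; field; lra. Qed.

Lemma A_pos : 0 < A.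
Proof.
  assert (0 < alpha < / 2) by (unfold alpha; split; [apply Rinv_0_lt_compat|apply Rinv_lt_contravar]; nra).
  unfold A. pose proof PI_RGT_0.
  apply Rmult_lt_0_compat; [apply Rdiv_lt_0_compat|]; lra.
Qed.

Lemma B_pos : 0 < B.
Proof.
  assert (0 < alpha) by (apply Rinv_0_lt_compat; lra).
  unfold B. pose proof PI_RGT_0.
  apply Rmult_lt_0_compat; [apply Rdiv_lt_0_compat|]; lra.
Qed.

Lemma rho_eta_pos x : 0 < rho_eta x.
Proof.
  pose proof A_pos; pose proof B_pos.
  pose proof (Rpower_pos x k); pose proof (Rpower_pos x (2 * k - 1)).
  unfold rho_eta; nra.
Qed.

Lemma p_eta_pos x : 0 < p_eta x.
Proof.
  pose proof A_pos; pose proof B_pos.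
  pose proof (Rpower_pos x (k + 1)); pose proof (Rpower_pos x (2 * k)).
  unfold p_eta. apply Rplus_lt_0_compat; apply Rdiv_lt_0_compat; nra.
Qed.

Lemma is_derive_p_eta x : 0 < x -> is_derive p_eta x (rho_eta x).
Proof.
  intros Hx.
  pose proof (is_derive_plus _ _ x _ _
    (is_derive_scal _ x (A / (k + 1)) _ (is_derive_Rpower x (k + 1) Hx))
    (is_derive_scal _ x (B / (2 * k)) _ (is_derive_Rpower x (2 * k) Hx))) as H.
  replace (rho_eta x) with (plus (A / (k + 1) * ((k + 1) * Rpower x (k + 1 - 1)))
                                 (B / (2 * k) * (2 * k * Rpower x (2 * k - 1)))).
  - refine (is_derive_ext _ _ _ _ _ H); intros t; unfold p_eta, plus; simpl.
    unfold Rdiv; ring.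
  - unfold rho_eta, plus; simpl. replace (k + 1 - 1) with k by ring. field; lra.
Qed.

Lemma is_derive_rho_eta x : 0 < x -> is_derive rho_eta x (n_eta x * rho_eta x / x).
Proof.
  intros Hx.
  pose proof (is_derive_plus _ _ x _ _
    (is_derive_scal _ x A _ (is_derive_Rpower x k Hx))
    (is_derive_scal _ x B _ (is_derive_Rpower x (2 * k - 1) Hx))) as H.
  set (Z := Rpower x (k - 1)).
  assert (HZ : 0 < Z) by apply Rpower_pos.
  assert (Ek : Rpower x k = Z * x)
    by (replace k with (k - 1 + 1) at 1 by ring; now rewrite Rpower_succ).
  assert (E2 : Rpower x (2 * k - 1 - 1) = Z * Z)
    by (unfold Z; rewrite <- Rpower_plus; f_equal; ring).
  assert (E2' : Rpower x (2 * k - 1) = Z * Z * x)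
    by (rewrite <- E2, <- Rpower_succ by lra; f_equal; ring).
  replace (n_eta x * rho_eta x / x)
    with (plus (A * (k * Z)) (B * ((2 * k - 1) * Rpower x (2 * k - 1 - 1)))).
  - exact H.
  - pose proof A_pos; pose proof B_pos.
    unfold n_eta, rho_eta, plus; simpl; fold Z. rewrite Ek, E2, E2'.
    field; split; nra.
Qed.

Lemma continuous_rho_eta x : 0 < x -> continuous rho_eta x.
Proof.
  intros Hx. apply (ex_derive_continuous rho_eta).
  eexists; now apply is_derive_rho_eta.
Qed.

Lemma p_eta_coeffs : 0 < A / (k + 1) /\ 0 < B / (2 * k).
Proof. pose proof A_pos; pose proof B_pos; split; apply Rdiv_lt_0_compat; lra. Qed.

Lemma p_eta_le x : 0 < x <= 1 -> p_eta x <= p_eta 1 * x.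
Proof.
  intros Hx. pose proof p_eta_coeffs.
  pose proof (Rpower_le_id x (k + 1) Hx ltac:(lra)).
  pose proof (Rpower_le_id x (2 * k) Hx ltac:(lra)).
  unfold p_eta; rewrite !Rpower_1_l; unfold Rdiv in *; nra.
Qed.

Lemma p_eta_ge x : 1 <= x -> p_eta 1 * x <= p_eta x.
Proof.
  intros Hx. pose proof p_eta_coeffs.
  pose proof (Rpower_ge_id x (k + 1) Hx ltac:(lra)).
  pose proof (Rpower_ge_id x (2 * k) Hx ltac:(lra)).
  unfold p_eta; rewrite !Rpower_1_l; unfold Rdiv in *; nra.
Qed.

Lemma p_eta_onto q : 0 < q -> exists x, 0 < x /\ p_eta x = q.
Proof.
  intros Hq. pose proof (p_eta_pos 1) as H1.
  set (x1 := Rmin 1 (q / p_eta 1)); set (x2 := Rmax 1 (2 * q / p_eta 1)).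
  assert (Hq1 : 0 < q / p_eta 1) by now apply Rdiv_lt_0_compat.
  assert (Hx1 : 0 < x1 <= 1) by (unfold x1, Rmin; destruct Rle_dec; lra).
  assert (Hx1q : x1 <= q / p_eta 1) by apply Rmin_r.
  assert (Hx2 : 1 <= x2) by apply Rmax_l.
  assert (Hx2q : 2 * q / p_eta 1 <= x2) by apply Rmax_r.
  assert (Hx12 : x1 < x2) by (unfold Rdiv in *; lra).
  assert (P1 : p_eta x1 <= q).
  { apply Rle_trans with (p_eta 1 * x1); [now apply p_eta_le|].
    apply (Rmult_le_compat_l (p_eta 1)) in Hx1q; [|lra].
    now rewrite Rmult_div_assoc, Rmult_div_r in Hx1q by lra. }
  assert (P2 : q <= p_eta x2).
  { apply Rle_trans with (p_eta 1 * x2); [|now apply p_eta_ge].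
    apply (Rmult_le_compat_l (p_eta 1)) in Hx2q; [|lra].
    rewrite Rmult_div_assoc, Rmult_div_r in Hx2q by lra; lra. }
  destruct (Ranalysis5.f_interv_is_interv p_eta x1 x2 q Hx12 (conj P1 P2)) as [x [Hx Hpx]].
  - intros x Hx. apply continuity_pt_filterlim, (ex_derive_continuous p_eta).
    eexists; apply is_derive_p_eta; lra.
  - exists x; split; [lra|exact Hpx].
Qed.

Lemma n_eta_asymptotically_polytropic : asymptotically_polytropic n_eta k (2 * k - 1).
Proof.
  pose proof A_pos; pose proof B_pos.
  assert (Hshare : forall x, 0 < B * Rpower x (k - 1) / (A + B * Rpower x (k - 1)) < 1 /\
             B * Rpower x (k - 1) / (A + B * Rpower x (k - 1)) <= B * Rpower x (k - 1) / A /\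
             A / (A + B * Rpower x (k - 1)) <= A / (B * Rpower x (k - 1)))
    by (intros x; apply ratio_sum_bounds; [|pose proof (Rpower_pos x (k - 1))]; nra).
  assert (En : forall x, n_eta x - k = (k - 1) * (B * Rpower x (k - 1) / (A + B * Rpower x (k - 1))))
    by (intros x; unfold n_eta, Rdiv; ring).
  assert (En' : forall x, n_eta x - (2 * k - 1) = - ((k - 1) * (A / (A + B * Rpower x (k - 1)))))
    by (intros x; pose proof (Rpower_pos x (k - 1)); unfold n_eta; field; nra).
  split; [|split].
  - exists (2 * k - 1); intros x _. pose proof (En x); pose proof (Hshare x); nra.
  - exists (k - 1), ((k - 1) * B / A), 1; split; [lra|split; [lra|]].
    intros x _. rewrite En. destruct (Hshare x) as [H01 [Hle _]].
    rewrite Rabs_pos_eq by nra.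
    replace ((k - 1) * B / A * Rpower x (k - 1)) with ((k - 1) * (B * Rpower x (k - 1) / A))
      by (unfold Rdiv; ring).
    apply Rmult_le_compat_l; lra.
  - exists (k - 1), ((k - 1) * A / B), 0; split; [lra|].
    intros x _ _. rewrite En', Rabs_Ropp, Rpower_Ropp.
    destruct (Hshare x) as [_ [_ Hle]]. pose proof (Rpower_pos x (k - 1)).
    assert (0 < A / (A + B * Rpower x (k - 1))) by (apply Rdiv_lt_0_compat; nra).
    rewrite Rabs_pos_eq by nra.
    replace ((k - 1) * A / B * / Rpower x (k - 1)) with ((k - 1) * (A / (B * Rpower x (k - 1))))
      by (field; lra).
    apply Rmult_le_compat_l; lra.
Qed.

Definition eta_sol r := Rpower (1 + r ^ 2) (- alpha).
Definition m_sol r := 2 * alpha * r ^ 3 * Rpower (1 + r ^ 2) (- alpha - 1).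
Definition p_sol r := p_eta (eta_sol r).

Lemma rho_eta_sol r : rho_eta (eta_sol r) =
  alpha / (2 * PI) * ((1 - 2 * alpha) * Rpower (1 + r ^ 2) (- alpha - 1)
                      + (2 + 2 * alpha) * Rpower (1 + r ^ 2) (- alpha - 2)).
Proof.
  unfold rho_eta, eta_sol, A, B; rewrite !Rpower_mult.
  replace (- alpha * k) with (- alpha - 1) by (pose proof alpha_mul_k; lra).
  replace (- alpha * (2 * k - 1)) with (- alpha - 2) by (pose proof alpha_mul_k; lra).
  ring.
Qed.

Lemma is_derive_m_sol r : is_derive m_sol r (4 * PI * r ^ 2 * rho_eta (eta_sol r)).
Proof.
  pose proof (pow2_ge_0 r).
  assert (Hcube : is_derive (fun t => 2 * alpha * t ^ 3) r (2 * alpha * (3 * r ^ 2)))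
    by (auto_derive; auto; ring).
  pose proof (is_derive_mult _ _ r _ _ Hcube (is_derive_Rpower_1_plus_sqr (- alpha - 1) r)
                Rmult_comm) as H'.
  assert (Hsucc : Rpower (1 + r ^ 2) (- alpha - 1) = Rpower (1 + r ^ 2) (- alpha - 2) * (1 + r ^ 2))
    by (rewrite <- Rpower_succ by lra; f_equal; ring).
  replace (4 * PI * r ^ 2 * rho_eta (eta_sol r)) with
    (plus (mult (2 * alpha * (3 * r ^ 2)) (Rpower (1 + r ^ 2) (- alpha - 1)))
          (mult (2 * alpha * r ^ 3)
                (2 * r * ((- alpha - 1) * Rpower (1 + r ^ 2) (- alpha - 1 - 1))))).
  - exact H'.
  - rewrite rho_eta_sol, Hsucc. replace (- alpha - 1 - 1) with (- alpha - 2) by ring.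
    unfold plus, mult; simpl.
    field; pose proof PI_RGT_0; lra.
Qed.

Lemma is_derive_eta_sol r : is_derive eta_sol r (- 2 * alpha * r * Rpower (1 + r ^ 2) (- alpha - 1)).
Proof.
  replace (- 2 * alpha * r * Rpower (1 + r ^ 2) (- alpha - 1))
    with (2 * r * (- alpha * Rpower (1 + r ^ 2) (- alpha - 1))) by ring.
  apply is_derive_Rpower_1_plus_sqr.
Qed.

Definition rho_of_p q := rho_eta (Pinv p_eta q).

Lemma rho_of_p_sol r : rho_of_p (p_sol r) = rho_eta (eta_sol r).
Proof.
  unfold rho_of_p, p_sol. f_equal.
  apply (Pinv_P p_eta rho_eta); auto using is_derive_p_eta, rho_eta_pos, p_eta_pos, p_eta_onto.
  apply Rpower_pos.
Qed.

Lemma is_derive_p_sol r : 0 < r ->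
  is_derive p_sol r (- (m_sol r * rho_of_p (p_sol r)) / r ^ 2).
Proof.
  intros Hr. rewrite rho_of_p_sol.
  pose proof (is_derive_comp p_eta eta_sol r _ _
                (is_derive_p_eta _ (Rpower_pos _ _)) (is_derive_eta_sol r)) as H.
  replace (- (m_sol r * rho_eta (eta_sol r)) / r ^ 2)
    with (- 2 * alpha * r * Rpower (1 + r ^ 2) (- alpha - 1) * rho_eta (eta_sol r)).
  - exact H.
  - unfold m_sol; field; lra.
Qed.

Lemma regular_solution_p_sol : regular_solution_on_halfline rho_of_p m_sol p_sol (p_sol 0).
Proof.
  split; [|split; [|split]].
  - apply p_eta_pos.
  - intros r Hr; split.
    + rewrite rho_of_p_sol; apply is_derive_m_sol.
    + now apply is_derive_p_sol.
  - replace (locally 0) with (locally (m_sol 0)) by (f_equal; unfold m_sol; ring).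
    apply continuous_at_right, (ex_derive_continuous m_sol).
    eexists; apply is_derive_m_sol.
  - apply continuous_at_right, (ex_derive_continuous p_sol).
    eexists; apply (is_derive_comp p_eta eta_sol).
    + apply is_derive_p_eta, Rpower_pos.
    + apply is_derive_eta_sol.
Qed.

End PlummerModel.

Theorem theorem4 :
  forall n0 : R, 3 < n0 ->
  exists (rho eta nf : R -> R) (n1 : R),
    barotropic_eos rho eta /\
    index_function rho eta nf /\
    asymptotically_polytropic nf n0 n1 /\
    exists (m p : R -> R) (pc : R),
      regular_solution_on_halfline rho m p pc /\
      (forall r, 0 < r -> 0 < p r).
Proof.
  intros k Hk.
  assert (Hp_der := is_derive_p_eta k Hk).
  assert (Hrho_pos : forall x, 0 < x -> 0 < rho_eta k x) by (intros; now apply rho_eta_pos).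
  assert (Hp_pos : forall x, 0 < x -> 0 < p_eta k x) by (intros; now apply p_eta_pos).
  exists (rho_of_p k), (Pinv (p_eta k)), (n_eta k), (2 * k - 1).
  split; [|split; [|split]].
  - apply barotropic_eos_Pinv; auto using continuous_rho_eta, p_eta_onto.
  - apply index_function_Pinv; auto using continuous_rho_eta, p_eta_onto, is_derive_rho_eta.
  - now apply n_eta_asymptotically_polytropic.
  - exists (m_sol k), (p_sol k), (p_sol k 0); split.
    + now apply regular_solution_p_sol.
    + intros r _; now apply p_eta_pos.
Qed.
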